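(* Let $V\subset\mathcal{A}_0$ be compact. Then for every $f\in V$ there exist $g\in\mathrm{bor}(V)$ and $x\in\overline D$ such that $f=P_xg$. Moreover, if $f\not\equiv e$ and $f=P_xg=P_yh$ with $g,h\in\mathrm{bor}(V)$ and $x,y\in\overline D$, then $h=P_ug$ for some $u$ with $|u|=1$.
   Context: $D=\{z:|z|<1\}$, $\overline D$ its closure. $\mathcal{A}$ is the space of functions $f(z)=\sum_{k\ge0}a_k(f)z^k$ analytic in $D$, with the topology of locally uniform convergence; $\mathcal{A}_0=\{f\in\mathcal{A}: a_0(f)=1\}$. For $x\in\overline D$, $(P_xf)(z)=f(xz)$. Let $e\equiv1$. If $V\ne\{e\}$, an element $f\in V$ is a border element of $V$ if whenever $f=P_xg$ with $g\in V$, $x\in\overline D$, then $|x|=1$; $\mathrm{bor}(V)$ is the set of border elements. If $V=\{e\}$, $\mathrm{bor}(V)=\{e\}$. *)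

(* Elements of the space A of analytic functions on
   the unit disc are represented by their Taylor coefficient sequences
   a : nat -> C, f(z) = sum_k a k z^k, required to converge on D. *)
From Stdlib Require Import Reals.
From Coquelicot Require Import Coquelicot.
Open Scope R_scope.

Definition coef := nat -> C.

Definition inA (f : coef) : Prop :=
  forall z : C, Cmod z < 1 -> ex_series (fun k => Cmult (f k) (Cpow z k)).

Definition inA0 (f : coef) : Prop := inA f /\ f 0%nat = RtoC 1.

Definition e_fun : coef := fun k => match k with O => RtoC 1 | S _ => RtoC 0 end.

(* (P_x f)(z) = f(xz), i.e. coefficients x^k a_k(f) *)
Definition P (x : C) (f : coef) : coef := fun k => Cmult (Cpow x k) (f k).

Definition eval_is (f : coef) (z w : C) : Prop :=
  is_series (fun k => Cmult (f k) (Cpow z k)) w.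

Definition lu_near (f : coef) (r eps : R) (g : coef) : Prop :=
  forall z u v, Cmod z <= r -> eval_is f z u -> eval_is g z v ->
    Cmod (Cminus v u) < eps.

(* open subsets of A for the topology of locally uniform convergence in D *)
Definition openA (U : coef -> Prop) : Prop :=
  forall f, U f -> inA f /\
    exists r eps, 0 <= r < 1 /\ 0 < eps /\
      forall g, inA g -> lu_near f r eps g -> U g.

Definition compactA (V : coef -> Prop) : Prop :=
  (forall f, V f -> inA f) /\
  forall (I : Type) (O : I -> coef -> Prop),
    (forall i, openA (O i)) ->
    (forall f, V f -> exists i, O i f) ->
    exists l : list I, forall f, V f -> exists i, List.In i l /\ O i f.

Definition is_e_singleton (V : coef -> Prop) : Prop :=
  forall h, V h <-> h = e_fun.

Definition bor (V : coef -> Prop) (f : coef) : Prop :=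
  (is_e_singleton V /\ f = e_fun) \/
  (~ is_e_singleton V /\ V f /\
    forall (g : coef) (x : C), V g -> Cmod x <= 1 -> f = P x g -> Cmod x = 1).

(* For f in V minimise |x| over all representations f = P_x h with h in V.  The
   infimum is attained: along a minimising sequence (x_n, h_n) the x_n have a
   convergent subsequence and, V being compact, the h_n have a cluster point g in V
   for locally uniform convergence.  That convergence controls every Taylor
   coefficient (Cauchy's estimate, obtained here by averaging over roots of unity),
   so f = P_x g in the limit.  Such a minimiser g is a border element: g = P_y h with
   h in V would give f = P_(xy) h, so |x| <= |xy| and |y| = 1.  The constant e is
   P_0 of any border element.  For uniqueness, if P_x g = P_y h with |x| <= |y| then
   h = P_(x/y) g, and h being a border element forces |x/y| = 1; the case |y| < |x|
   is excluded symmetrically. *)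

From Stdlib Require Import Reals Lra Lia List.
From Stdlib Require Import Classical FunctionalExtensionality IndefiniteDescription.
From Coquelicot Require Import Coquelicot.
Open Scope R_scope.

(** * Dilations and border elements *)

Section Dilations.
Local Open Scope C_scope.

Lemma P_mul (x y : C) (h : coef) : P x (P y h) = P (x * y) h.
Proof. apply functional_extensionality; intro k; unfold P; rewrite Cpow_mult_l; ring. Qed.

Lemma P_1 (h : coef) : P 1 h = h.
Proof. apply functional_extensionality; intro k; unfold P; rewrite Cpow_1_l; ring. Qed.

Lemma P_0 (h : coef) : h 0%nat = 1 -> P 0 h = e_fun.
Proof.
  intro h0; apply functional_extensionality; intros [|k]; unfold P, e_fun; simpl.
  - rewrite h0; ring.
  - ring.
Qed.

Lemma P_eq_div (x y : C) (g h : coef) : y <> 0 -> P x g = P y h -> h = P (x / y) g.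
Proof.
  intros y0 E; apply functional_extensionality; intro k.
  pose proof (f_equal (fun F => F k) E) as Ek; unfold P in *; simpl in Ek.
  pose proof (Cpow_nz y k y0) as yk.
  unfold Cdiv; rewrite Cpow_mult_l, Cpow_inv by exact y0.
  replace (h k) with (/ y ^ k * (y ^ k * h k)) by (field; exact yk).
  rewrite <- Ek; field; exact yk.
Qed.

Lemma Cmod_mul_le_1 (x y : C) : Cmod x <= 1 -> Cmod y <= 1 -> Cmod (x * y) <= 1.
Proof.
  rewrite Cmod_mult; intros x1 y1.
  pose proof (Cmod_ge_0 x); pose proof (Cmod_ge_0 y); nra.
Qed.

End Dilations.

Section Border.
Local Open Scope C_scope.

Variable V : coef -> Prop.
Hypothesis V_A0 : forall f, V f -> inA0 f.

Lemma bor_in_V (g : coef) : ~ is_e_singleton V -> bor V g -> V g /\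
  forall h x, V h -> Cmod x <= 1 -> g = P x h -> Cmod x = 1.
Proof. intros ns [[s _] | [_ B]]; [contradiction | exact B]. Qed.

Lemma bor_dilation_unique (f g h : coef) (x y : C) : V f -> f <> e_fun ->
  bor V g -> bor V h -> Cmod x <= 1 -> Cmod y <= 1 ->
  f = P x g -> f = P y h -> exists u, Cmod u = 1 /\ h = P u g.
Proof.
  intros Vf fe Bg Bh x1 y1 Eg Eh.
  assert (ns : ~ is_e_singleton V) by (intro s; apply fe, s, Vf).
  destruct (bor_in_V g ns Bg) as [Vg Bg'], (bor_in_V h ns Bh) as [Vh Bh'].
  assert (x0 : x <> 0).
  { intros ->; apply fe; rewrite Eg; apply P_0, (V_A0 g Vg). }
  assert (y0 : y <> 0).
  { intros ->; apply fe; rewrite Eh; apply P_0, (V_A0 h Vh). }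
  assert (xpos := proj1 (Cmod_gt_0 x) x0); assert (ypos := proj1 (Cmod_gt_0 y) y0).
  assert (Ehg : h = P (x / y) g) by (apply P_eq_div; congruence).
  assert (Egh : g = P (y / x) h) by (apply P_eq_div; congruence).
  destruct (Rle_or_lt (Cmod x) (Cmod y)) as [xy | yx].
  - exists (x / y); split; [| exact Ehg].
    apply (Bh' g); [exact Vg | | exact Ehg].
    rewrite Cmod_div by exact y0; apply (Rdiv_le_1 _ _ ypos); exact xy.
  - exfalso.
    assert (E : Cmod (y / x) = 1).
    { apply (Bg' h); [exact Vh | | exact Egh].
      rewrite Cmod_div by exact x0; apply (Rdiv_le_1 _ _ xpos); lra. }
    rewrite Cmod_div in E by exact x0.
    apply Rdiv_diag_uniq in E; lra.
Qed.

Lemma not_singleton_witness (f : coef) : V f -> ~ is_e_singleton V ->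
  exists h, V h /\ h <> e_fun.
Proof.
  intros Vf ns; apply NNPP; intro none; apply ns; intro h; split.
  - intro Vh; apply NNPP; intro he; apply none; exists h; split; assumption.
  - intros ->; apply NNPP; intro ne; apply none; exists f; split; [exact Vf |].
    intros ->; exact (ne Vf).
Qed.

Lemma bor_of_minimal_dilation (f g : coef) (x : C) : ~ is_e_singleton V -> V g ->
  x <> 0 -> Cmod x <= 1 -> f = P x g ->
  (forall h y, V h -> Cmod y <= 1 -> f = P y h -> Cmod x <= Cmod y) -> bor V g.
Proof.
  intros ns Vg x0 x1 Ef minimal; right; split; [exact ns | split; [exact Vg |]].
  intros h y Vh y1 Eg.
  assert (xpos := proj1 (Cmod_gt_0 x) x0).
  assert (le : Cmod x <= Cmod x * Cmod y).
  { rewrite <- Cmod_mult; apply (minimal h); [exact Vh | apply Cmod_mul_le_1; assumption |].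
    rewrite Ef, Eg, P_mul; reflexivity. }
  nra.
Qed.

End Border.

(** * Series *)

Lemma norm_series_le {K : AbsRing} {V : NormedModule K} (a : nat -> V) (b : nat -> R)
  (la : V) (lb : R) :
  is_series a la -> is_series b lb -> (forall n, norm (a n) <= b n) -> norm la <= lb.
Proof.
  intros Ha Hb ab.
  assert (partial : forall n, norm (sum_n a n) <= sum_n b n).
  { intro n; eapply Rle_trans; [apply norm_sum_n_m | apply sum_n_m_le, ab]. }
  assert (lim_norm : is_lim_seq (fun n => norm (sum_n a n)) (norm la)).
  { exact (filterlim_comp _ _ _ _ norm _ _ _ Ha (filterlim_norm la)). }
  exact (is_lim_seq_le _ _ _ _ partial lim_norm (Hb : is_lim_seq (sum_n b) lb)).
Qed.

Lemma is_series_sum_n {K : AbsRing} {V : NormedModule K} (a : nat -> nat -> V)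
  (l : nat -> V) (n : nat) :
  (forall j, is_series (a j) (l j)) ->
  is_series (fun m => sum_n (fun j => a j m) n) (sum_n l n).
Proof.
  intro Ha; induction n as [| n IH].
  - rewrite sum_O; apply (is_series_ext (a 0%nat)); [intro m; rewrite sum_O |]; auto.
  - rewrite sum_Sn; apply (is_series_ext (fun m => plus (sum_n (fun j => a j m) n) (a (S n) m))).
    + intro m; rewrite sum_Sn; reflexivity.
    + apply is_series_plus; auto.
Qed.

Lemma sum_Sn_C (a : nat -> C) (n : nat) : sum_n a (S n) = (sum_n a n + a (S n))%C.
Proof. rewrite sum_Sn; reflexivity. Qed.

Lemma Cmod_sum_n_le (a : nat -> C) (n : nat) (B : R) :
  (forall j, Cmod (a j) <= B) -> Cmod (sum_n a n) <= INR (S n) * B.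
Proof.
  intro aB; eapply Rle_trans; [apply (norm_sum_n_m a 0 n) |].
  rewrite <- sum_n_const; apply sum_n_m_le; exact aB.
Qed.

Lemma sum_n_single (a : nat -> C) (n k : nat) : (k <= n)%nat ->
  (forall m, (m <= n)%nat -> m <> k -> a m = RtoC 0) -> (sum_n a n : C) = a k.
Proof.
  revert k; induction n as [| n IH]; intros k kn a0.
  - replace k with 0%nat by lia; apply sum_O.
  - rewrite sum_Sn_C; destruct (Nat.eq_dec k (S n)) as [-> | ne].
    + assert (E : (sum_n a n : C) = RtoC 0).
      { rewrite (sum_n_ext_loc _ (fun _ => zero)).
        { exact (sum_n_m_const_zero (G := C_AbelianMonoid) 0 n). }
        intros m mn; apply a0; lia. }
      rewrite E; ring.
    + rewrite (IH k), (a0 (S n)); [ring | lia | lia | lia |].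
      intros m mn; apply a0; lia.
Qed.

Lemma series_terms_bounded (a : nat -> C) : ex_series a -> exists B, forall m, Cmod (a m) <= B.
Proof.
  intro Ha; destruct (filterlim_bounded (sum_n a) Ha) as [B HB].
  assert (HB' : forall n, Cmod (sum_n a n) <= B) by exact HB.
  exists (2 * B); intros [| m].
  - rewrite <- sum_O; pose proof (Cmod_ge_0 (sum_n a 0)); pose proof (HB' 0%nat); lra.
  - replace (a (S m)) with (sum_n a (S m) - sum_n a m)%C by (rewrite sum_Sn_C; ring).
    eapply Rle_trans; [apply Cmod_triangle |]; rewrite Cmod_opp.
    pose proof (HB' (S m)); pose proof (HB' m); lra.
Qed.

Lemma eval_unique (h : coef) (z w1 w2 : C) : eval_is h z w1 -> eval_is h z w2 -> w1 = w2.
Proof. apply (filterlim_locally_unique (F := eventually)). Qed.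

Lemma eval_minus (f g : coef) (z u v : C) : eval_is f z u -> eval_is g z v ->
  eval_is (fun m => g m - f m)%C z (v - u)%C.
Proof.
  intros Hu Hv; unfold eval_is.
  apply (is_series_ext (fun m => plus (g m * z ^ m)%C (opp (f m * z ^ m)%C))).
  - intro m; change ((g m * z ^ m) + - (f m * z ^ m) = (g m - f m) * z ^ m)%C; ring.
  - exact (is_series_minus (K := C_AbsRing) (V := C_NormedModule) _ _ _ _ Hv Hu).
Qed.

Lemma coef_geometric_decay (d : coef) (r : R) : inA d -> 0 <= r < 1 ->
  exists K q, 0 <= q < 1 /\ forall m, Cmod (d m) * r ^ m <= K * q ^ m.
Proof.
  intros Hd r01; set (r' := (1 + r) / 2).
  assert (r'0 : 0 < r') by (unfold r'; lra).
  assert (Hr' : Cmod (RtoC r') < 1) by (rewrite Cmod_R, Rabs_pos_eq; unfold r'; lra).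
  destruct (series_terms_bounded _ (Hd _ Hr')) as [K HK].
  exists K, (r / r'); split.
  - split; [apply Rdiv_le_0_compat; lra | apply (Rdiv_lt_1 _ _ r'0); unfold r'; lra].
  - intro m; specialize (HK m).
    rewrite Cmod_mult, Cmod_pow, Cmod_R, Rabs_pos_eq in HK by lra.
    replace (r ^ m) with (r' ^ m * (r / r') ^ m)
      by (rewrite <- Rpow_mult_distr; f_equal; field; lra).
    rewrite <- Rmult_assoc; apply Rmult_le_compat_r; [| exact HK].
    apply pow_le, Rdiv_le_0_compat; lra.
Qed.

(** * Cauchy estimates *)

Section RootsOfUnity.
Local Open Scope C_scope.

Definition root_unity (N : nat) : C := (cos (2 * PI / INR N), sin (2 * PI / INR N)).

Lemma root_unity_pow (N p : nat) :
  root_unity N ^ p = (cos (2 * PI * INR p / INR N), sin (2 * PI * INR p / INR N)).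
Proof.
  induction p as [| p IH].
  - replace (2 * PI * INR 0 / INR N)%R with 0%R by (simpl; unfold Rdiv; ring).
    rewrite cos_0, sin_0; reflexivity.
  - rewrite Cpow_S, IH.
    replace (2 * PI * INR (S p) / INR N)%R with (2 * PI / INR N + 2 * PI * INR p / INR N)%R
      by (rewrite S_INR; unfold Rdiv; ring).
    rewrite cos_plus, sin_plus; unfold root_unity, Cmult; simpl; f_equal; ring.
Qed.

Lemma Cmod_root_unity_pow (N p : nat) : Cmod (root_unity N ^ p) = 1%R.
Proof.
  rewrite root_unity_pow; unfold Cmod; simpl.
  pose proof (sin2_cos2 (2 * PI * INR p / INR N)) as E; unfold Rsqr in E.
  transitivity (sqrt 1); [f_equal; lra | apply sqrt_1].
Qed.

Lemma root_unity_pow_order (N : nat) : (0 < N)%nat -> root_unity N ^ N = 1.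
Proof.
  intro N0; rewrite root_unity_pow.
  assert (0 < INR N)%R by (apply lt_0_INR; exact N0).
  replace (2 * PI * INR N / INR N)%R with (2 * PI)%R by (field; lra).
  rewrite cos_2PI, sin_2PI; reflexivity.
Qed.

Lemma root_unity_pow_neq_1 (N p : nat) : (0 < p < N)%nat -> root_unity N ^ p <> 1.
Proof.
  intros pN E; rewrite root_unity_pow in E; injection E as Ec Es.
  assert (0 < INR p < INR N)%R by (split; [apply lt_0_INR | apply lt_INR]; lia).
  set (t := (2 * PI * INR p / INR N)%R) in *.
  assert (0 < t < 2 * PI)%R.
  { pose proof PI_RGT_0; unfold t; split.
    - apply Rdiv_lt_0_compat; nra.
    - apply (Rmult_lt_reg_r (INR N)); [lra |]; field_simplify; nra. }
  destruct (Rtotal_order t PI) as [tPI | [tPI | tPI]].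
  - pose proof (sin_gt_0 t); lra.
  - rewrite tPI, cos_PI in Ec; lra.
  - pose proof (sin_lt_0 t); lra.
Qed.

Lemma geometric_sum_root (z : C) (n : nat) :
  z ^ S n = 1 -> z <> 1 -> (sum_n (fun j => z ^ j) n : C) = 0.
Proof.
  intros zn z1.
  assert (telescope : forall m, sum_n (fun j => z ^ j) m * (z - 1) = z ^ S m - 1).
  { induction m as [| m IH].
    - rewrite sum_O; simpl; ring.
    - rewrite sum_Sn_C, Cmult_plus_distr_r, IH, !Cpow_S; ring. }
  assert (z - 1 <> 0) as z1' by (intro E; apply z1; rewrite <- (Cplus_0_l 1), <- E; ring).
  replace (sum_n (fun j => z ^ j) n) with (sum_n (fun j => z ^ j) n * (z - 1) * / (z - 1))
    by (field; exact z1').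
  rewrite telescope, zn; ring.
Qed.

Lemma root_unity_sum_order (n : nat) :
  (sum_n (fun j => (root_unity (S n) ^ S n) ^ j) n : C) = INR (S n).
Proof.
  rewrite root_unity_pow_order by lia.
  induction n as [| n IH].
  - rewrite sum_O; simpl; ring.
  - rewrite sum_Sn_C, IH, Cpow_1_l, (S_INR (S n)), RtoC_plus; reflexivity.
Qed.

Lemma root_unity_sum_vanish (n p : nat) : (0 < p < 2 * S n)%nat -> p <> S n ->
  (sum_n (fun j => (root_unity (S n) ^ p) ^ j) n : C) = 0.
Proof.
  intros p0 pn; apply geometric_sum_root.
  - rewrite <- Cpow_mult_r, Nat.mul_comm, Cpow_mult_r, root_unity_pow_order, Cpow_1_l by lia.
    reflexivity.
  - destruct (Compare_dec.lt_dec p (S n)); [apply root_unity_pow_neq_1; lia |].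
    replace p with (S n + (p - S n))%nat by lia.
    rewrite Cpow_add_r, root_unity_pow_order, Cmult_1_l by lia.
    apply root_unity_pow_neq_1; lia.
Qed.

End RootsOfUnity.

Section CircleAverage.
Local Open Scope C_scope.

(* With ω a primitive (n+1)-th root of unity, ω^(S n - k) stands for ω^(-k):
   averaging ω^(-jk) d(r ω^j) over j keeps exactly the terms d_m r^m with
   m = k mod (n+1).  [aliased_term d r n k m] is (n+1) times the m-th term of
   this filtered series. *)
Definition aliased_term (d : coef) (r : R) (n k m : nat) : C :=
  d m * r ^ m * sum_n (fun j => (root_unity (S n) ^ (m + (S n - k))) ^ j) n.

Lemma aliased_term_series (d : coef) (r : R) (n k : nat) (w : nat -> C) :
  (forall j, eval_is d (r * root_unity (S n) ^ j) (w j)) ->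
  is_series (aliased_term d r n k)
    (sum_n (fun j => (root_unity (S n) ^ (S n - k)) ^ j * w j) n).
Proof.
  intro Hw; set (ω := root_unity (S n)).
  apply (is_series_ext
    (fun m => sum_n (fun j => (ω ^ (S n - k)) ^ j * (d m * (r * ω ^ j) ^ m)) n)).
  - intro m; unfold aliased_term.
    transitivity (sum_n (fun j => scal (d m * r ^ m) ((ω ^ (m + (S n - k))) ^ j)) n).
    + apply sum_n_ext; intro j.
      change ((ω ^ (S n - k)) ^ j * (d m * (r * ω ^ j) ^ m)
              = d m * r ^ m * (ω ^ (m + (S n - k))) ^ j).
      rewrite Cpow_mult_l, <- !Cpow_mult_r, Nat.mul_add_distr_r, Cpow_add_r, (Nat.mul_comm j m).
      ring.
    + rewrite sum_n_scal_l; reflexivity.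
  - apply (is_series_sum_n (K := C_AbsRing) (V := C_NormedModule)); intro j.
    apply (is_series_scal_l (V := C_NormedModule)), Hw.
Qed.

Lemma aliased_term_diag (d : coef) (r : R) (n k : nat) : (k <= n)%nat ->
  aliased_term d r n k k = INR (S n) * (d k * r ^ k).
Proof.
  intro kn; unfold aliased_term.
  replace (k + (S n - k))%nat with (S n) by lia.
  rewrite root_unity_sum_order; ring.
Qed.

Lemma aliased_term_vanish (d : coef) (r : R) (n k m : nat) :
  (k <= n)%nat -> (m <= n)%nat -> m <> k -> aliased_term d r n k m = 0.
Proof.
  intros kn mn mk; unfold aliased_term.
  rewrite root_unity_sum_vanish by lia; ring.
Qed.

Lemma Cmod_aliased_term (d : coef) (r : R) (n k m : nat) : (0 <= r)%R ->
  Cmod (aliased_term d r n k m) <= INR (S n) * (Cmod (d m) * r ^ m).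
Proof.
  intro r0; unfold aliased_term.
  rewrite !Cmod_mult, Cmod_pow, Cmod_R, Rabs_pos_eq by exact r0.
  rewrite Rmult_comm; apply Rmult_le_compat_r.
  - apply Rmult_le_pos; [apply Cmod_ge_0 | apply pow_le, r0].
  - rewrite <- (Rmult_1_r (INR (S n))); apply Cmod_sum_n_le; intro j.
    rewrite <- Cpow_mult_r, Cmod_root_unity_pow; apply Rle_refl.
Qed.

Lemma Cmod_circle_average (n k : nat) (w : nat -> C) (M : R) :
  (forall j, Cmod (w j) <= M) ->
  Cmod (sum_n (fun j => (root_unity (S n) ^ (S n - k)) ^ j * w j) n) <= INR (S n) * M.
Proof.
  intro wM; apply Cmod_sum_n_le; intro j.
  rewrite Cmod_mult, <- Cpow_mult_r, Cmod_root_unity_pow, Rmult_1_l; apply wM.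
Qed.

Lemma aliased_series_tail (d : coef) (r K q : R) (n k : nat) (B : C) :
  (0 <= r)%R -> (k <= n)%nat -> (0 <= q < 1)%R ->
  (forall m, Cmod (d m) * r ^ m <= K * q ^ m)%R ->
  is_series (aliased_term d r n k) B ->
  Cmod (B - aliased_term d r n k k) <= INR (S n) * K * q ^ S n / (1 - q).
Proof.
  intros r0 kn q01 decay Hser; set (e := aliased_term d r n k).
  assert (Htail : is_series (fun i => e (S n + i)%nat) (B - e k)).
  { apply is_series_incr_n; [lia |]; simpl Init.Nat.pred.
    change (is_series e ((B - e k) + sum_n (G := C_AbelianMonoid) e n)).
    rewrite (sum_n_single e n k kn) by (intros; apply aliased_term_vanish; lia).
    replace ((B - e k) + e k) with B by ring.
    exact Hser. }
  assert (Hgeom : is_series (fun i => INR (S n) * K * q ^ S n * q ^ i)%R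
                            (INR (S n) * K * q ^ S n / (1 - q))%R).
  { apply (is_series_scal_l (V := R_NormedModule)), is_series_geom.
    rewrite Rabs_pos_eq; lra. }
  apply (norm_series_le _ _ _ _ Htail Hgeom); intro i.
  eapply Rle_trans; [apply Cmod_aliased_term, r0 |].
  rewrite Rmult_assoc, Rmult_assoc, <- pow_add.
  apply Rmult_le_compat_l; [apply pos_INR | apply decay].
Qed.

End CircleAverage.

Lemma coef_circle_bound (d : coef) (r M K q : R) (n k : nat) :
  inA d -> 0 <= r < 1 -> (k <= n)%nat ->
  (forall z w, Cmod z = r -> eval_is d z w -> Cmod w <= M) ->
  0 <= q < 1 -> (forall m, Cmod (d m) * r ^ m <= K * q ^ m) ->
  Cmod (d k) * r ^ k <= M + K * q ^ S n / (1 - q).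
Proof.
  intros Hd r01 kn HM q01 decay.
  set (ω := root_unity (S n)).
  assert (Cmod_z : forall j, Cmod (r * ω ^ j)%C = r).
  { intro j; rewrite Cmod_mult, Cmod_R, Rabs_pos_eq by lra.
    unfold ω; rewrite Cmod_root_unity_pow; ring. }
  destruct (functional_choice (fun j w => eval_is d (r * ω ^ j)%C w)) as [w Hw].
  { intro j; apply Hd; rewrite Cmod_z; lra. }
  set (B := (sum_n (fun j => (ω ^ (S n - k)) ^ j * w j)%C n : C)).
  set (e := aliased_term d r n k).
  assert (Hser : is_series e B) by exact (aliased_term_series d r n k w Hw).
  assert (HB : Cmod B <= INR (S n) * M).
  { apply Cmod_circle_average; intro j; apply (HM _ _ (Cmod_z j) (Hw j)). }
  assert (Htail := aliased_series_tail d r K q n k B (proj1 r01) kn q01 decay Hser).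
  fold e in Htail.
  assert (Hek : Cmod (e k) = INR (S n) * (Cmod (d k) * r ^ k)).
  { unfold e; rewrite aliased_term_diag by exact kn.
    rewrite Cmod_mult, Cmod_mult, Cmod_R, Cmod_pow, Cmod_R, !Rabs_pos_eq;
      [reflexivity | lra | apply pos_INR]. }
  assert (Hsplit : Cmod (e k) <= Cmod B + Cmod (B - e k)%C).
  { pose proof (Cmod_triangle B (- (B - e k))) as T.
    rewrite Cmod_opp in T; replace (B + - (B - e k))%C with (e k) in T by ring; exact T. }
  assert (n0 : 0 < INR (S n)) by apply lt_0_INR, Nat.lt_0_succ.
  apply (Rmult_le_reg_l (INR (S n)) _ _ n0).
  rewrite <- Hek; unfold Rdiv in *; nra.
Qed.

Lemma geometric_tail_small (K q eps : R) (k : nat) : 0 <= q < 1 -> 0 < eps ->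
  exists n, (k <= n)%nat /\ K * q ^ S n / (1 - q) <= eps.
Proof.
  intros q01 eps0; set (c := Rabs K + 1).
  assert (c0 : 0 < c) by (unfold c; pose proof (Rabs_pos K); lra).
  assert (y0 : 0 < eps * (1 - q) / c) by (apply Rdiv_lt_0_compat; [apply Rmult_lt_0_compat |]; lra).
  destruct (pow_lt_1_zero q ltac:(rewrite Rabs_pos_eq; lra) _ y0) as [N HN].
  exists (max k N); split; [lia |].
  specialize (HN (S (max k N)) ltac:(lia)); rewrite Rabs_pos_eq in HN by (apply pow_le; lra).
  apply (Rmult_lt_compat_l c) in HN; [| exact c0].
  replace (c * (eps * (1 - q) / c)) with (eps * (1 - q)) in HN by (field; lra).
  apply (Rmult_le_reg_r (1 - q)); [lra |].
  replace (K * q ^ S (max k N) / (1 - q) * (1 - q)) with (K * q ^ S (max k N)) by (field; lra).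
  pose proof (Rle_abs K); pose proof (pow_le q (S (max k N)) (proj1 q01)); unfold c in HN; nra.
Qed.

Lemma cauchy_estimate (d : coef) (r M : R) (k : nat) : inA d -> 0 <= r < 1 ->
  (forall z w, Cmod z = r -> eval_is d z w -> Cmod w <= M) -> Cmod (d k) * r ^ k <= M.
Proof.
  intros Hd r01 HM.
  destruct (coef_geometric_decay d r Hd r01) as [K [q [q01 decay]]].
  apply Rle_plus_epsilon; intros eps eps0.
  destruct (geometric_tail_small K q eps k q01 eps0) as [n [kn small]].
  pose proof (coef_circle_bound d r M K q n k Hd r01 kn HM q01 decay); lra.
Qed.

(** * Locally uniform convergence and compactness *)

Lemma lu_near_refl (h : coef) (r eps : R) : 0 < eps -> lu_near h r eps h.
Proof.
  intros eps0 z u v _ Hu Hv; rewrite (eval_unique h z u v Hu Hv).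
  replace (v - v)%C with (RtoC 0) by ring; rewrite Cmod_0; exact eps0.
Qed.

Lemma lu_near_trans (h1 h2 h3 : coef) (r e1 e2 : R) : r < 1 -> inA h2 ->
  lu_near h1 r e1 h2 -> lu_near h2 r e2 h3 -> lu_near h1 r (e1 + e2) h3.
Proof.
  intros r1 A2 N12 N23 z u v zr Hu Hv.
  destruct (A2 z ltac:(lra)) as [w Hw].
  specialize (N12 z u w zr Hu Hw); specialize (N23 z w v zr Hw Hv).
  replace (v - u)%C with ((v - w) + (w - u))%C by ring.
  eapply Rle_lt_trans; [apply Cmod_triangle | lra].
Qed.

Definition lu_interior (B : coef -> Prop) (h : coef) : Prop :=
  inA h /\ exists r eps, 0 <= r < 1 /\ 0 < eps /\
    forall h', inA h' -> lu_near h r eps h' -> B h'.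

Lemma lu_interior_open (B : coef -> Prop) : openA (lu_interior B).
Proof.
  intros h [Ah [r [eps [r1 [eps0 HB]]]]]; split; [exact Ah |].
  exists r, (eps / 2); split; [exact r1 | split; [lra |]].
  intros g Ag Ng; split; [exact Ag |].
  exists r, (eps / 2); split; [exact r1 | split; [lra |]].
  intros h' Ah' N'; apply HB; [exact Ah' |].
  replace eps with (eps / 2 + eps / 2) by field.
  apply lu_near_trans with g; auto; lra.
Qed.

Lemma lu_interior_sub (B : coef -> Prop) (h : coef) : lu_interior B h -> B h.
Proof.
  intros [Ah [r [eps [_ [eps0 HB]]]]]; apply HB; [exact Ah | apply lu_near_refl, eps0].
Qed.

Record lu_ball := { ball_center : coef; ball_radius : R; ball_eps : R }.

Definition in_lu_ball (b : lu_ball) : coef -> Prop :=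
  lu_near (ball_center b) (ball_radius b) (ball_eps b).

Lemma compactA_cluster (V : coef -> Prop) (H : nat -> coef) :
  compactA V -> (forall n, V (H n)) ->
  exists g, V g /\ forall r eps N, 0 <= r < 1 -> 0 < eps ->
    exists n, (N <= n)%nat /\ lu_near g r eps (H n).
Proof.
  intros [V_A cover] VH; apply NNPP; intro no_cluster.
  (* Otherwise every g in V has a ball that H eventually leaves for good, and H M
     lies in none of the balls of a finite subcover once M exceeds their thresholds. *)
  set (escapes := fun (b : lu_ball) (N : nat) =>
    V (ball_center b) /\ (0 <= ball_radius b < 1 /\ 0 < ball_eps b) /\
    forall n, (N <= n)%nat -> ~ in_lu_ball b (H n)).
  assert (esc : forall g, V g -> exists r eps N, escapes (Build_lu_ball g r eps) N).
  { intros g Vg; apply NNPP; intro C; apply no_cluster; exists g; split; [exact Vg |].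
    intros r eps N r1 eps0; apply NNPP; intro C'; apply C; exists r, eps, N.
    split; [exact Vg | split; [split; assumption |]].
    intros n Nn Hn; apply C'; exists n; split; assumption. }
  set (I := {p : lu_ball * nat | escapes (fst p) (snd p)}).
  destruct (cover I (fun i => lu_interior (in_lu_ball (fst (proj1_sig i)))))
    as [l Hl].
  - intro i; apply lu_interior_open.
  - intros g Vg; destruct (esc g Vg) as [r [eps [N E]]].
    exists (exist _ (Build_lu_ball g r eps, N) E).
    destruct (proj1 (proj2 E)) as [r1 eps0]; simpl in *.
    split; [exact (V_A g Vg) |].
    exists r, eps; split; [exact r1 | split; [exact eps0 |]].
    intros h' Ah' N'; exact N'.
  - set (M := list_max (map (fun i : I => snd (proj1_sig i)) l)).
    destruct (Hl (H M) (VH M)) as [[[b N] E] [il Hi]].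
    apply lu_interior_sub in Hi.
    apply (proj2 (proj2 E) M); [| exact Hi].
    apply (proj1 (Forall_forall _ _) (proj1 (list_max_le _ M) (le_n M))).
    exact (in_map (fun i : I => snd (proj1_sig i)) l _ il).
Qed.

Lemma coef_lu_continuous (f : coef) (k : nat) (δ : R) : inA f -> 0 < δ ->
  exists r eps, 0 <= r < 1 /\ 0 < eps /\
    forall g, inA g -> lu_near f r eps g -> Cmod (g k - f k)%C < δ.
Proof.
  intros Af δ0; exists (1 / 2), (δ / 2 * (1 / 2) ^ k).
  assert (half_k : 0 < (1 / 2) ^ k) by (apply pow_lt; lra).
  split; [lra | split; [apply Rmult_lt_0_compat; lra |]].
  intros g Ag near.
  set (d := fun m => (g m - f m)%C).
  assert (Ad : inA d).
  { intros z z1; destruct (Af z z1) as [u Hu], (Ag z z1) as [v Hv].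
    exists (v - u)%C; exact (eval_minus f g z u v Hu Hv). }
  assert (bound : Cmod (d k) * (1 / 2) ^ k <= δ / 2 * (1 / 2) ^ k).
  { apply (cauchy_estimate d (1 / 2) _ k Ad ltac:(lra)); intros z w z_half Hw.
    assert (z1 : Cmod z < 1) by lra.
    destruct (Af z z1) as [u Hu], (Ag z z1) as [v Hv].
    rewrite (eval_unique d z w (v - u)%C Hw (eval_minus f g z u v Hu Hv)).
    left; apply (near z u v); [lra | exact Hu | exact Hv]. }
  apply Rmult_le_reg_r in bound; [unfold d in bound; lra | exact half_k].
Qed.

(** * Minimal representations *)

Lemma strict_incr_ge (φ : nat -> nat) : (forall n, (φ n < φ (S n))%nat) ->
  forall n, (n <= φ n)%nat.
Proof. intros incr n; induction n as [| n IH]; [lia | specialize (incr n); lia]. Qed.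

Lemma strict_incr_le (φ : nat -> nat) : (forall n, (φ n < φ (S n))%nat) ->
  forall n m, (n <= m)%nat -> (φ n <= φ m)%nat.
Proof. intros incr n m nm; induction nm as [| m _ IH]; [lia | specialize (incr m); lia]. Qed.

Lemma subseq_cv_R (u : nat -> R) (a b : R) : (forall n, a <= u n <= b) ->
  exists (φ : nat -> nat) l, (forall n, (φ n < φ (S n))%nat) /\
    forall eps, 0 < eps -> exists N, forall n, (N <= n)%nat -> Rabs (u (φ n) - l) < eps.
Proof.
  intro ab; destruct (Bolzano_Weierstrass u _ (compact_P3 a b) ab) as [l cluster].
  assert (next : forall n N, {p | (N <= p)%nat /\ Rabs (u p - l) < / INR (S n)}).
  { intros n N; apply constructive_indefinite_description.
    assert (pos : 0 < / INR (S n)) by (apply Rinv_0_lt_compat, lt_0_INR; lia).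
    destruct (cluster (disc l (mkposreal _ pos)) N) as [p [Np Hp]].
    - exists (mkposreal _ pos); intros y Hy; exact Hy.
    - exists p; split; assumption. }
  set (φ := fix φ n := match n with
                       | O => proj1_sig (next O O)
                       | S m => proj1_sig (next (S m) (S (φ m)))
                       end).
  assert (close : forall n, Rabs (u (φ n) - l) < / INR (S n)).
  { intros [| n]; simpl; [exact (proj2 (proj2_sig (next O O))) |].
    exact (proj2 (proj2_sig (next (S n) _))). }
  exists φ, l; split.
  - intro n; exact (proj1 (proj2_sig (next (S n) (S (φ n))))).
  - intros eps eps0; destruct (archimed_cor1 eps eps0) as [N [HN N0]].
    exists N; intros n Nn.
    eapply Rlt_le_trans; [apply close |]; eapply Rle_trans; [| left; exact HN].
    apply Rinv_le_contravar; [apply lt_0_INR; lia | apply le_INR; lia].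
Qed.

Lemma subseq_cv_disc (X : nat -> C) : (forall n, Cmod (X n) <= 1) ->
  exists (φ : nat -> nat) x0, (forall n, (n <= φ n)%nat) /\
    forall eps, 0 < eps -> exists N, forall n, (N <= n)%nat -> Cmod (X (φ n) - x0)%C < eps.
Proof.
  intro X1.
  assert (coords : forall n, -1 <= fst (X n) <= 1 /\ -1 <= snd (X n) <= 1).
  { intro n; pose proof (Rmax_Cmod (X n)); pose proof (X1 n).
    pose proof (Rmax_l (Rabs (fst (X n))) (Rabs (snd (X n)))).
    pose proof (Rmax_r (Rabs (fst (X n))) (Rabs (snd (X n)))).
    split; apply Rabs_le_between; lra. }
  destruct (subseq_cv_R (fun n => fst (X n)) (-1) 1) as [φ1 [a [incr1 cv1]]].
  { intro n; apply coords. }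
  destruct (subseq_cv_R (fun n => snd (X (φ1 n))) (-1) 1) as [φ2 [b [incr2 cv2]]].
  { intro n; apply coords. }
  exists (fun n => φ1 (φ2 n)), (a, b); split.
  - intro n; pose proof (strict_incr_ge _ incr2 n).
    pose proof (strict_incr_le _ incr1 _ _ H).
    pose proof (strict_incr_ge _ incr1 (φ2 n)); lia.
  - intros eps eps0.
    destruct (cv1 (eps / 2) ltac:(lra)) as [N1 HN1], (cv2 (eps / 2) ltac:(lra)) as [N2 HN2].
    exists (max N1 N2); intros n Nn.
    specialize (HN2 n ltac:(lia)).
    specialize (HN1 (φ2 n) ltac:(pose proof (strict_incr_ge _ incr2 n); lia)).
    eapply Rle_lt_trans; [apply Cmod_2Rmax |]; simpl; unfold Rminus in HN1, HN2.
    set (m := Rmax _ _).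
    assert (m_lt : m < eps / 2) by (apply Rmax_lub_lt; assumption).
    assert (m0 : 0 <= m) by (eapply Rle_trans; [apply Rabs_pos | apply Rmax_l]).
    assert (sqrt 2 < 2) by (pose proof (sqrt_pos 2); pose proof (sqrt_sqrt 2 ltac:(lra)); nra).
    pose proof (sqrt_pos 2); nra.
Qed.

Lemma Cmod_pow_sub_le (a b : C) (j : nat) : Cmod a <= 1 -> Cmod b <= 1 ->
  Cmod (a ^ j - b ^ j)%C <= INR j * Cmod (a - b)%C.
Proof.
  intros a1 b1; induction j as [| j IH].
  - simpl; replace (1 - 1)%C with (RtoC 0) by ring; rewrite Cmod_0; lra.
  - rewrite !Cpow_S.
    replace (a * a ^ j - b * b ^ j)%C with (a * (a ^ j - b ^ j) + (a - b) * b ^ j)%C by ring.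
    eapply Rle_trans; [apply Cmod_triangle |]; rewrite !Cmod_mult, Cmod_pow, S_INR.
    assert (Cmod b ^ j <= 1)
      by (rewrite <- (pow1 j); apply pow_incr; split; [apply Cmod_ge_0 | exact b1]).
    pose proof (pow_le (Cmod b) j (Cmod_ge_0 b)); pose proof (Cmod_ge_0 a).
    pose proof (Cmod_ge_0 (a - b)%C); pose proof (Cmod_ge_0 (a ^ j - b ^ j)%C); nra.
Qed.

Lemma dilation_limit (f g : coef) (H : nat -> coef) (X : nat -> C) (x0 : C) :
  inA g -> (forall n, inA (H n)) -> (forall n, Cmod (X n) <= 1) -> Cmod x0 <= 1 ->
  (forall n, f = P (X n) (H n)) ->
  (forall eps, 0 < eps -> exists N, forall n, (N <= n)%nat -> Cmod (X n - x0)%C < eps) ->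
  (forall r eps N, 0 <= r < 1 -> 0 < eps -> exists n, (N <= n)%nat /\ lu_near g r eps (H n)) ->
  f = P x0 g.
Proof.
  intros Ag AH X1 x1 Ef cvX cluster; apply functional_extensionality; intro j.
  assert (dist0 : Cmod (f j - x0 ^ j * g j)%C <= 0).
  { apply Rle_plus_epsilon; intros eps eps0; rewrite Rplus_0_l.
    set (c := 1 + INR j * Cmod (g j)).
    assert (c0 : 0 < c) by (unfold c; pose proof (pos_INR j); pose proof (Cmod_ge_0 (g j)); nra).
    set (δ := eps / c); assert (δ0 : 0 < δ) by (apply Rdiv_lt_0_compat; assumption).
    destruct (coef_lu_continuous g j δ Ag δ0) as [r [e0 [r01 [e00 coef_close]]]].
    destruct (cvX δ δ0) as [N HN].
    destruct (cluster r e0 N r01 e00) as [n [Nn near]].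
    specialize (HN n Nn); specialize (coef_close (H n) (AH n) near).
    replace (f j) with (X n ^ j * H n j)%C by (rewrite (Ef n); reflexivity).
    replace (X n ^ j * H n j - x0 ^ j * g j)%C
      with (X n ^ j * (H n j - g j) + (X n ^ j - x0 ^ j) * g j)%C by ring.
    eapply Rle_trans; [apply Cmod_triangle |]; rewrite !Cmod_mult, Cmod_pow.
    pose proof (Cmod_pow_sub_le (X n) x0 j (X1 n) x1).
    assert (Cmod (X n) ^ j <= 1)
      by (rewrite <- (pow1 j); apply pow_incr; split; [apply Cmod_ge_0 | apply X1]).
    pose proof (pow_le (Cmod (X n)) j (Cmod_ge_0 _)).
    pose proof (Cmod_ge_0 (g j)); pose proof (pos_INR j).
    pose proof (Cmod_ge_0 (H n j - g j)%C).
    assert (eps_eq : eps = δ * c) by (unfold δ; field; lra).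
    assert (A1 : Cmod (X n) ^ j * Cmod (H n j - g j)%C <= δ) by nra.
    assert (A2 : Cmod (X n ^ j - x0 ^ j)%C * Cmod (g j) <= INR j * δ * Cmod (g j)).
    { apply Rmult_le_compat_r; [apply Cmod_ge_0 |].
      pose proof (Cmod_ge_0 (X n - x0)%C); nra. }
    unfold c in eps_eq; nra. }
  assert (E0 : (f j - x0 ^ j * g j)%C = 0).
  { apply Cmod_eq_0; pose proof (Cmod_ge_0 (f j - x0 ^ j * g j)%C); lra. }
  unfold P; replace (f j) with ((f j - x0 ^ j * g j) + x0 ^ j * g j)%C by ring.
  rewrite E0; ring.
Qed.

Lemma inf_approx (E : R -> Prop) : (exists s, E s) -> (forall s, E s -> 0 <= s) ->
  exists t, (forall s, E s -> t <= s) /\ forall eps, 0 < eps -> exists s, E s /\ s < t + eps.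
Proof.
  intros [s0 Es0] E0.
  destruct (completeness (fun s => E (- s))) as [m [ub lub]].
  - exists 0; intros s Es; specialize (E0 _ Es); lra.
  - exists (- s0); rewrite Ropp_involutive; exact Es0.
  - exists (- m); split.
    + intros s Es; assert (ub' := ub (- s)); cbv beta in ub'; rewrite Ropp_involutive in ub'.
      specialize (ub' Es); lra.
    + intros eps eps0; apply NNPP; intro none.
      assert (m <= m - eps); [| lra].
      apply lub; intros s Es; apply Rnot_lt_le; intro; apply none.
      exists (- s); split; [exact Es | lra].
Qed.

Lemma Cmod_limit_le (X : nat -> C) (φ : nat -> nat) (x0 : C) (t : R) :
  (forall n, Cmod (X n) < t + / INR (S n)) -> (forall n, (n <= φ n)%nat) ->
  (forall eps, 0 < eps -> exists N, forall n, (N <= n)%nat -> Cmod (X (φ n) - x0)%C < eps) ->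
  Cmod x0 <= t.
Proof.
  intros Xt φ_ge cvX; apply Rle_plus_epsilon; intros eps eps0.
  destruct (cvX (eps / 2) ltac:(lra)) as [N1 HN1].
  destruct (archimed_cor1 (eps / 2) ltac:(lra)) as [N2 [HN2 N20]].
  set (n := max N1 N2); specialize (HN1 n ltac:(unfold n; lia)).
  assert (/ INR (S (φ n)) <= / INR N2).
  { apply Rinv_le_contravar; [apply lt_0_INR; lia |].
    apply le_INR; specialize (φ_ge n); unfold n in *; lia. }
  pose proof (Xt (φ n)).
  pose proof (Cmod_triangle (X (φ n)) (- (X (φ n) - x0))%C) as T.
  rewrite Cmod_opp in T; replace (X (φ n) + - (X (φ n) - x0))%C with x0 in T by ring.
  lra.
Qed.

Lemma minimal_dilation (V : coef -> Prop) (f : coef) :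
  compactA V -> (forall h, V h -> inA0 h) -> V f -> f <> e_fun ->
  exists g x, V g /\ Cmod x <= 1 /\ f = P x g /\ x <> 0 /\
    forall h y, V h -> Cmod y <= 1 -> f = P y h -> Cmod x <= Cmod y.
Proof.
  intros HC HV Vf fe.
  set (E := fun s => exists h y, V h /\ Cmod y <= 1 /\ f = P y h /\ s = Cmod y).
  destruct (inf_approx E) as [t [t_lb t_approx]].
  - exists 1, f, 1; rewrite P_1, Cmod_1; repeat split; auto; lra.
  - intros s [h [y [_ [_ [_ ->]]]]]; apply Cmod_ge_0.
  assert (t1 : t <= 1).
  { rewrite <- Cmod_1; apply t_lb; exists f, 1; rewrite P_1, Cmod_1; repeat split; auto; lra. }
  destruct (functional_choice (fun (n : nat) (p : coef * C) =>
    V (fst p) /\ Cmod (snd p) <= 1 /\ f = P (snd p) (fst p) /\ Cmod (snd p) < t + / INR (S n)))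
    as [seq Hseq].
  { intro n; assert (pos : 0 < / INR (S n)) by (apply Rinv_0_lt_compat, lt_0_INR; lia).
    destruct (t_approx _ pos) as [s [[h [y [Vh [y1 [Ef ->]]]]] lt]].
    exists (h, y); repeat split; assumption. }
  set (H := fun n => fst (seq n)); set (X := fun n => snd (seq n)).
  destruct (subseq_cv_disc X (fun n => proj1 (proj2 (Hseq n)))) as [φ [x0 [φ_ge cvX]]].
  destruct (compactA_cluster V (fun n => H (φ n)) HC (fun n => proj1 (Hseq (φ n))))
    as [g [Vg cluster]].
  assert (x0_t : Cmod x0 <= t)
    by exact (Cmod_limit_le X φ x0 t (fun n => proj2 (proj2 (proj2 (Hseq n)))) φ_ge cvX).
  assert (x01 : Cmod x0 <= 1) by lra.
  assert (Ef : f = P x0 g).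
  { apply (dilation_limit f g (fun n => H (φ n)) (fun n => X (φ n)) x0); try assumption.
    - exact (proj1 (HV g Vg)).
    - intro n; exact (proj1 (HV _ (proj1 (Hseq (φ n))))).
    - intro n; exact (proj1 (proj2 (Hseq (φ n)))).
    - intro n; exact (proj1 (proj2 (proj2 (Hseq (φ n))))). }
  exists g, x0; repeat split; try assumption.
  - intro x00; apply fe; rewrite Ef, x00; apply P_0, (proj2 (HV g Vg)).
  - intros h y Vh y1 Eh; pose proof (t_lb (Cmod y) ltac:(exists h, y; auto)); lra.
Qed.

Theorem lemma6 (V : coef -> Prop) :
  compactA V -> (forall f, V f -> inA0 f) ->
  (forall f, V f -> exists (g : coef) (x : C), bor V g /\ Cmod x <= 1 /\ f = P x g) /\
  (forall (f g h : coef) (x y : C), V f -> f <> e_fun ->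
     bor V g -> bor V h -> Cmod x <= 1 -> Cmod y <= 1 ->
     f = P x g -> f = P y h ->
     exists u : C, Cmod u = 1 /\ h = P u g).
Proof.
  intros HC HV; split; [| exact (bor_dilation_unique V HV)].
  intros f Vf; destruct (classic (is_e_singleton V)) as [single | ns].
  - exists e_fun, 0; split; [left; split; [exact single | reflexivity] |].
    rewrite Cmod_0, (proj1 (single f) Vf), P_0 by reflexivity; split; [lra | reflexivity].
  - assert (nontrivial : exists f', V f' /\ f' <> e_fun /\ (f = e_fun \/ f' = f)).
    { destruct (classic (f = e_fun)) as [-> | fe].
      - destruct (not_singleton_witness V e_fun Vf ns) as [h [Vh he]]; eauto.
      - eauto. }
    destruct nontrivial as [f' [Vf' [f'e f'_f]]].
    destruct (minimal_dilation V f' HC HV Vf' f'e) as [g [x [Vg [x1 [Ef' [x0 minimal]]]]]].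
    assert (Bg : bor V g) by exact (bor_of_minimal_dilation V f' g x ns Vg x0 x1 Ef' minimal).
    destruct f'_f as [-> | <-].
    + exists g, 0; rewrite Cmod_0, P_0 by exact (proj2 (HV g Vg)); repeat split; auto; lra.
    + exists g, x; auto.
Qed.
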